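(* Let $\Omega\subset\mathbb{R}^n$ be a bounded simply connected open set with smooth boundary, $\sigma_0\in C^2(\overline{\Omega})$ with $\sigma_0>0$ on $\overline{\Omega}$, $f\in C^{2,\alpha}(\partial\Omega)$, and let $u_0$ solve $\nabla\cdot\sigma_0\nabla u_0=0$ in $\Omega$, $u_0|_{\partial\Omega}=f$, with $\nabla u_0\neq0$ on $\overline{\Omega}$. Fix $p>0$. For $h\in C^2(\overline{\Omega})$ set $\rho=h/\sigma_0$ and $$d F_{\sigma_0}(h)=h|\nabla u_0|^p+p|\nabla u_0|^{p-2}\sigma_0\nabla u_0\cdot\nabla v_0,$$ where $v_0$ solves $\nabla\cdot\sigma_0\nabla v_0=-\nabla\cdot(h\nabla u_0)$ in $\Omega$, $v_0|_{\partial\Omega}=0$. Then $$\sigma_0\,T_0\!\left(\frac{dF_{\sigma_0}(h)}{\sigma_0|\nabla u_0|^p}\right)=-L\,\Delta_{\sigma_0,D}^{-1}\big(\sigma_0T_0\rho\big),$$ where $T_0=\nabla u_0\cdot\nabla$, $\Delta_{\sigma_0,D}$ is the Dirichlet realization of $\Delta_{\sigma_0}=\nabla\cdot\sigma_0\nabla$ in $\Omega$, and $L$ is the differential operator $$Lv=-\nabla\cdot\sigma_0\nabla v+p\,\nabla\cdot\left(\sigma_0\frac{\nabla u_0\cdot\nabla v}{|\nabla u_0|^2}\nabla u_0\right).$$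
   Context: $dF_{\sigma_0}$ is the differential at $\sigma_0$ of $F(\sigma)=\sigma|\nabla u_\sigma|^p$, with $u_\sigma$ the $\sigma$-harmonic function with boundary data $f$; $h$ plays the role of $\sigma-\sigma_0$ and $\rho=(\sigma-\sigma_0)/\sigma_0$. *)

From HB Require Import structures.
From mathcomp Require Import all_boot all_order all_algebra.
From mathcomp Require Import all_classical all_reals all_analysis.
Set Implicit Arguments. Unset Strict Implicit. Unset Printing Implicit Defensive.
Import Order.TTheory GRing.Theory Num.Theory.
Import numFieldNormedType.Exports.
Local Open Scope classical_set_scope.
Local Open Scope ring_scope.

Section Defs.
Variables (R : realType) (n : nat).
Local Notation V := 'rV[R]_n.

Definition ebasis (i : 'I_n) : V := delta_mx 0 i.

Definition partial (i : 'I_n) (f : V -> R) (x : V) : R := 'D_(ebasis i) f x.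

Definition grad (f : V -> R) (x : V) : V := \row_i partial i f x.
Definition dotv (u v : V) : R := \sum_i u 0 i * v 0 i.
Definition enorm (u : V) : R := Num.sqrt (dotv u u).

Definition divg (F : V -> V) (x : V) : R :=
  \sum_i partial i (fun y => F y 0 i) x.

Definition bdry (A : set V) : set V := closure A `\` interior A.

Definition C1_on (A : set V) (f : V -> R) : Prop :=
  forall x, A x -> differentiable f x /\ forall i, {for x, continuous (partial i f)}.
Definition C2_on (A : set V) (f : V -> R) : Prop :=
  C1_on A f /\ forall i, C1_on A (partial i f).

Definition cont_ext (A : set V) (g : V -> R) : Prop :=
  exists G : V -> R, {within closure A, continuous G} /\ forall x, A x -> G x = g x.

Definition C2_closure (A : set V) (f : V -> R) : Prop :=
  [/\ C2_on A f, {within closure A, continuous f},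
      forall i, cont_ext A (partial i f) &
      forall i j, cont_ext A (partial j (partial i f))].


Definition iter_partial (s : seq 'I_n) (f : V -> R) : V -> R :=
  foldr (fun i g => partial i g) f s.
Definition smooth_on (A : set V) (f : V -> R) : Prop :=
  forall s x, A x -> differentiable (iter_partial s f) x.

Definition smooth_boundary (A : set V) : Prop :=
  forall x0, bdry A x0 -> exists2 r : R, 0 < r &
    exists phi : V -> R, [/\ smooth_on (ball x0 r) phi,
      (forall y, ball x0 r y -> grad phi y != 0) &
      (forall y, ball x0 r y -> (A y <-> phi y < 0))].

(* simple connectivity: nonempty, path connected, every loop freely
   homotopic (within A) to a constant loop *)
Definition unit_itv : set R := [set t | 0 <= t <= 1].
Definition unit_sq : set (R * R) := [set st | 0 <= st.1 <= 1 /\ 0 <= st.2 <= 1].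
Definition simply_connected (A : set V) : Prop :=
  [/\ A !=set0,
    (forall x y, A x -> A y -> exists g : R -> V,
       [/\ {within unit_itv, continuous g}, g 0 = x, g 1 = y &
           forall t, unit_itv t -> A (g t)]) &
    (forall g : R -> V, {within unit_itv, continuous g} -> g 0 = g 1 ->
       (forall t, unit_itv t -> A (g t)) ->
       exists H : R -> R -> V,
       [/\ {within unit_sq, continuous (fun st => H st.1 st.2)},
           (forall s, unit_itv s -> H s 0 = g s),
           (forall s, unit_itv s -> H s 1 = H 0 1),
           (forall t, unit_itv t -> H 0 t = H 1 t) &
           (forall s t, unit_itv s -> unit_itv t -> A (H s t))])].

(* f belongs to C^{2,alpha}(boundary of A): f is the trace on the boundary of
   a C^2 function on R^n whose second derivatives are alpha-Hoelder on
   closure A (equivalent to the intrinsic definition for smooth bounded A) *)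
Definition C2alpha_bdry (A : set V) (alpha : R) (f : V -> R) : Prop :=
  exists F : V -> R, [/\ C2_on setT F,
    (forall x, bdry A x -> F x = f x) &
    forall i j, exists K : R, forall x y, closure A x -> closure A y ->
      `|partial j (partial i F) x - partial j (partial i F) y| <= K * (`|x - y| `^ alpha)].

Definition sigma_lap (sigma v : V -> R) (x : V) : R :=
  divg (fun y => sigma y *: grad v y) x.

Definition T0 (u0 w : V -> R) (x : V) : R := dotv (grad u0 x) (grad w x).

Definition dF (p : R) (sigma0 u0 h v0 : V -> R) (x : V) : R :=
  h x * (enorm (grad u0 x) `^ p)
  + p * (enorm (grad u0 x) `^ (p - 2)) * sigma0 x * dotv (grad u0 x) (grad v0 x).

Definition Lop (p : R) (sigma0 u0 v : V -> R) (x : V) : R :=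
  - sigma_lap sigma0 v x
  + p * divg (fun y => (sigma0 y * dotv (grad u0 y) (grad v y)
                         / dotv (grad u0 y) (grad u0 y)) *: grad u0 y) x.

End Defs.

From HB Require Import structures.
From mathcomp Require Import all_boot all_order all_algebra.
From mathcomp Require Import all_classical all_reals all_analysis.
From mathcomp Require Import ring lra.
Set Implicit Arguments. Unset Strict Implicit. Unset Printing Implicit Defensive.
Import Order.TTheory GRing.Theory Num.Theory.
Import numFieldNormedType.Exports.
Local Open Scope classical_set_scope.
Local Open Scope ring_scope.

(* Since [u0] is [sigma0]-harmonic, [div (h grad u0) = sigma0 T0 rho], so [v0]
   and [- w] solve the same homogeneous Dirichlet problem for [Delta_sigma0];
   the weak maximum principle, proved with the barrier [exp (lam x_i)], gives
   [v0 = - w].  Then [grad v0 = - grad w] and the normalised differential is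
   [rho - p G] with [G = grad u0 . grad w / |grad u0|^2].  By the product rule
   [div (G sigma0 grad u0) = sigma0 T0 G + G Delta_sigma0 u0 = sigma0 T0 G], so
   [- L w = sigma0 T0 rho - p sigma0 T0 G], which is [sigma0 T0] applied to it.
   Only the maximum principle needs global hypotheses (bounded [Omega], [sigma0]
   positive and continuous up to the boundary with a continuous extension of
   one partial derivative). *)

Section LineRestriction.
Variables (R : realType) (n : nat).
Local Notation V := 'rV[R]_n.
Implicit Types (f : V -> R) (x e : V).

Let line_quotient f x e (s : R) :
  (fun h : R => h^-1 *: (((fun t : R => f (t *: e + x)) \o shift s) (h *: 1)
                         - f (s *: e + x)))
  = (fun h : R => h^-1 *: ((f \o shift (s *: e + x)) (h *: e) - f (s *: e + x))).
Proof.
apply: funext => h /=; congr (_ *: (_ - _)); congr f.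
by rewrite /shift /= scaler1 scalerDl addrA.
Qed.

Lemma derive_line f x e (s : R) :
  'D_1 (fun t : R => f (t *: e + x)) s = 'D_e f (s *: e + x).
Proof. by rewrite /derive /= line_quotient. Qed.

Lemma derivable_line f x e (s : R) :
  derivable (fun t : R => f (t *: e + x)) s 1 = derivable f (s *: e + x) e.
Proof. by rewrite /derivable /= line_quotient. Qed.

Lemma open_line (A : set V) x e : open A -> A x ->
  exists2 r : R, 0 < r & forall t : R, `|t| < r -> A (t *: e + x).
Proof.
move=> oA Ax; have /nbhs_ballP [r r0 sub] : nbhs x A by apply: open_nbhs_nbhs.
have e1 : 0 < `|e| + 1 by rewrite ltr_wpDl.
exists (r / (`|e| + 1)); first by rewrite divr_gt0.
move=> t; rewrite ltr_pdivlMr // => tr; apply: sub.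
rewrite -ball_normE /ball_ /= opprD addrCA subrr addr0 normrN normrZ.
by apply: le_lt_trans tr; rewrite ler_wpM2l // lerDl.
Qed.

End LineRestriction.

Lemma derive1_gt0_right (R : realType) (q : R -> R) :
  q 0 = 0 -> derivable q 0 1 -> 0 < 'D_1 q 0 ->
  exists2 t0 : R, 0 < t0 & forall t, 0 < t <= t0 -> 0 < q t.
Proof.
move=> q0 dq Dq.
have /nbhs_ballP [r r0 Hr] : \forall t \near 0^', 0 < t^-1 *: ((q \o shift 0) t%:A - q 0).
  exact: cvgr_gt _ dq _ Dq.
exists (r / 2) => [|t /andP[t0 tr]]; first by rewrite divr_gt0.
have /Hr : ball 0 r t by rewrite /ball /= sub0r normrN gtr0_norm //; lra.
rewrite q0 subr0 /= => /(_ (lt0r_neq0 t0)).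
rewrite /shift /= addr0 [t%:A]mulr1.
by rewrite -[_ *: _]/(_ * _) pmulr_rgt0 // invr_gt0.
Qed.

Section InteriorMaximum.
Variables (R : realType) (n : nat).
Local Notation V := 'rV[R]_n.
Variables (A : set V) (f : V -> R) (x e : V).
Hypotheses (oA : open A) (Ax : A x) (fmax : forall y, A y -> f y <= f x)
  (df : forall y, A y -> derivable f y e).

Lemma derive_eq0_at_max : 'D_e f x = 0.
Proof.
have [r r0 Ar] := open_line e oA Ax.
have Ar' t : t \in `](- r), r[ -> A (t *: e + x).
  by rewrite in_itv /= => tr; apply: Ar; rewrite ltr_norml.
have c0 : (0 : R) \in `](- r), r[ by rewrite in_itv /= oppr_lt0 r0.
have dline t : t \in `](- r), r[ -> derivable (fun t : R => f (t *: e + x)) t 1.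
  by move=> /Ar' At; rewrite derivable_line; apply: df.
have := derive1_at_max (ltW (gtrN r0)) dline c0.
rewrite scale0r add0r => /(_ (fun t tr => fmax (Ar' t tr))) max0.
by rewrite -[x]add0r -(scale0r e) -derive_line derive_val.
Qed.

(* At an interior maximum the flux [sig * D_e f] vanishes, so if it increased
   along [e] then [f] would increase along [e] as well. *)
Lemma derive_flux_le0_at_max (sig : V -> R) :
  (forall y, A y -> 0 < sig y) ->
  derivable (fun y => sig y * 'D_e f y) x e ->
  'D_e (fun y => sig y * 'D_e f y) x <= 0.
Proof.
move=> sig0 dQ; rewrite leNgt; apply/negP => DQ.
have [r r0 Ar] := open_line e oA Ax.
pose g t := f (t *: e + x).
have ex : 0 *: e + x = x by rewrite scale0r add0r.
have [t0 t00 Dg0] : exists2 t0 : R, 0 < t0 &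
    forall t, 0 < t <= t0 -> 0 < sig (t *: e + x) * 'D_e f (t *: e + x).
  pose Q y := sig y * 'D_e f y.
  apply: (@derive1_gt0_right _ (fun t => Q (t *: e + x))).
  - by rewrite ex /Q derive_eq0_at_max mulr0.
  - by rewrite derivable_line ex.
  - by rewrite derive_line ex.
pose t1 := Num.min t0 (r / 2).
have t10 : 0 < t1 by rewrite lt_min t00 divr_gt0.
have t1t0 : t1 <= t0 by rewrite /t1 ge_min lexx.
have t1r : t1 < r by apply: le_lt_trans (_ : r / 2 < r); [rewrite /t1 ge_min lexx orbT | lra].
have At t : 0 <= t <= t1 -> A (t *: e + x).
  by move=> /andP[t0' tt1]; apply: Ar; rewrite ger0_norm //; apply: le_lt_trans t1r.
have dg t : 0 <= t <= t1 -> derivable g t 1.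
  by move=> /At; rewrite /g derivable_line; apply: df.
have : g 0 < g t1.
  apply: (@gtr0_derive1_incr _ g 0 t1 _ _ _ 0 t1 (lexx 0) t10 (lexx t1)).
  - by move=> t; rewrite in_itv /= => /andP[tp tt1]; apply: dg; rewrite !ltW.
  - move=> t; rewrite in_itv /= => /andP[tp tt1].
    rewrite derive1E /g derive_line.
    have /(Dg0 t) : 0 < t <= t0 by rewrite tp ltW // (lt_le_trans tt1).
    by rewrite pmulr_rgt0 // sig0 //; apply: At; rewrite !ltW.
  - apply: continuous_in_subspaceT => t; rewrite inE /= in_itv /= => /dg dgt.
    exact/differentiable_continuous/derivable1_diffP.
by rewrite /g ex ltNge fmax //; apply: At; rewrite lexx ltW.
Qed.

End InteriorMaximum.

Section Calculus.
Variables (R : realType) (n : nat).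
Local Notation V := 'rV[R]_n.
Implicit Types (f g sig : V -> R) (x v : V).

Lemma derive_mul f g x v : derivable f x v -> derivable g x v ->
  'D_v (fun y => f y * g y) x = 'D_v f x * g x + f x * 'D_v g x.
Proof.
move=> df dg; have -> : (fun y => f y * g y) = f * g by [].
rewrite (deriveM df dg).
by rewrite -[f x *: _]/(_ * _) -[g x *: _]/(_ * _) addrC mulrC.
Qed.

Lemma derivable_mul f g x v : derivable f x v -> derivable g x v ->
  derivable (fun y => f y * g y) x v.
Proof. exact: derivableM. Qed.

Lemma derivable_div f g x v : g x != 0 -> derivable f x v -> derivable g x v ->
  derivable (fun y => f y / g y) x v.
Proof. by move=> g0 df dg; exact: derivable_mul df (derivableV g0 dg). Qed.

Lemma derive_div f g x v : g x != 0 -> derivable f x v -> derivable g x v ->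
  'D_v (fun y => f y / g y) x = 'D_v f x / g x - f x * 'D_v g x / g x ^+ 2.
Proof.
move=> g0 df dg; rewrite (derive_mul df (derivableV g0 dg)).
by rewrite deriveV // -[_ *: _]/(_ * _); field.
Qed.

Lemma ebasisE (i j : 'I_n) : ebasis R i 0 j = (j == i)%:R.
Proof. by rewrite /ebasis mxE eqxx. Qed.

Lemma sigma_lap_sum sig f x :
  sigma_lap sig f x = \sum_i partial i (fun y => sig y * partial i f y) x.
Proof.
apply: eq_bigr => i _; congr (partial i _ x).
by apply: funext => y; rewrite !mxE.
Qed.

Lemma dotv_grad f g x : dotv (grad f x) (grad g x) = \sum_i partial i f x * partial i g x.
Proof. by apply: eq_bigr => i _; rewrite !mxE. Qed.

End Calculus.

Lemma near_on_open (T : topologicalType) (A : set T) (P : T -> Prop) x :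
  open A -> A x -> (forall y, A y -> P y) -> \forall y \near x, P y.
Proof. by move=> oA Ax AP; apply: filterS (open_nbhs_nbhs (conj oA Ax)). Qed.

Section TwiceDerivable.
Variables (R : realType) (n : nat).
Local Notation V := 'rV[R]_n.
Variable A : set V.
Hypothesis oA : open A.
Implicit Types (f g sig : V -> R) (x v : V).

Definition derivable_on f := forall y, A y -> forall v, derivable f y v.

Definition twice_derivable_on f :=
  derivable_on f /\ forall i, derivable_on (partial i f).

Lemma C2_on_twice_derivable f : C2_on A f -> twice_derivable_on f.
Proof.
move=> [C1 C1p]; split => [y Ay v|i y Ay v]; apply: diff_derivable.
  exact: (C1 y Ay).1.
exact: (C1p i y Ay).1.
Qed.

Lemma twice_derivable_onD f g : twice_derivable_on f -> twice_derivable_on g ->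
  twice_derivable_on (f + g).
Proof.
move=> [df ddf] [dg ddg]; split => [y Ay v|i y Ay v].
  exact: derivableD (df y Ay v) (dg y Ay v).
apply: near_eq_derivable (derivableD (ddf i y Ay v) (ddg i y Ay v)).
by apply: (near_on_open oA) => // z Az; rewrite /partial deriveD //; [exact: df | exact: dg].
Qed.

Lemma twice_derivable_onZ k f : twice_derivable_on f -> twice_derivable_on (k \*: f).
Proof.
move=> [df ddf]; split => [y Ay v|i y Ay v].
  exact: (derivableZ (k := k) (df y Ay v)).
apply: near_eq_derivable (derivableZ (k := k) (ddf i y Ay v)).
by apply: (near_on_open oA) => // z Az; rewrite /partial deriveZ //; exact: df.
Qed.

Lemma sigma_lapD sig f g x : A x -> (forall v, derivable sig x v) ->
  twice_derivable_on f -> twice_derivable_on g ->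
  sigma_lap sig (f + g) x = sigma_lap sig f x + sigma_lap sig g x.
Proof.
move=> Ax ds [df ddf] [dg ddg]; rewrite !sigma_lap_sum -big_split /=.
apply: eq_bigr => i _; rewrite /partial -deriveD; last 2 first.
- exact: derivable_mul (ds _) (ddf i x Ax _).
- exact: derivable_mul (ds _) (ddg i x Ax _).
apply: near_eq_derive; apply: (near_on_open oA) => // y Ay /=; rewrite -mulrDr.
by congr (_ * _); rewrite /partial deriveD //; [exact: df | exact: dg].
Qed.

Lemma sigma_lapZ sig k f x : A x -> (forall v, derivable sig x v) ->
  twice_derivable_on f -> sigma_lap sig (k \*: f) x = k * sigma_lap sig f x.
Proof.
move=> Ax ds [df ddf]; rewrite !sigma_lap_sum mulr_sumr.
apply: eq_bigr => i _; rewrite /partial -[k * _]/(k *: _) -deriveZ; last first.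
  exact: derivable_mul (ds _) (ddf i x Ax _).
apply: near_eq_derive; apply: (near_on_open oA) => // y Ay; rewrite /partial deriveZ; last exact: df.
by rewrite /= -![_ *: _]/(_ * _) mulrCA.
Qed.

End TwiceDerivable.

Section Barrier.
Variables (R : realType) (n : nat) (i0 : 'I_n) (lam : R).
Local Notation V := 'rV[R]_n.

Definition exp_barrier (y : V) : R := expR (lam * y 0 i0).

Lemma exp_barrier_gt0 y : 0 < exp_barrier y.
Proof. exact: expR_gt0. Qed.

Lemma continuous_exp_barrier : continuous exp_barrier.
Proof.
move=> y; apply: continuous_comp; last exact: continuous_expR.
by apply: continuousM; [exact: cst_continuous | exact: coord_continuous].
Qed.

Lemma is_derive_exp_barrier (y v : V) :
  is_derive y v exp_barrier (lam * v 0 i0 * exp_barrier y).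
Proof.
pose c := lam * v 0 i0.
have line : (fun t : R => exp_barrier (t *: v + y))
    = expR \o (c \*: id + cst (lam * y 0 i0)).
  apply: funext => t; rewrite /exp_barrier /= !mxE; congr expR.
  by rewrite -[RHS]/(c * t + lam * y 0 i0) /c; ring.
have dline : is_derive (0 : R) 1 (fun t : R => exp_barrier (t *: v + y))
    (c * exp_barrier y).
  have daff : is_derive (0 : R) 1 (c \*: id + cst (lam * y 0 i0)) (c *: 1 + 0).
    exact: is_deriveD.
  rewrite line; have := is_derive1_comp (is_derive_expR _) daff.
  rewrite -[(_ \*: _ + _) 0]/(c * 0 + lam * y 0 i0) mulr0 add0r addr0.
  by rewrite [c%:A]mulr1 [c * _]mulrC.
have ey : 0 *: v + y = y by rewrite scale0r add0r.
have [dl Dl] := dline.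
apply: DeriveDef; first by rewrite -[y]ey -derivable_line.
by rewrite -[y in 'D_v _ y]ey -derive_line Dl.
Qed.

Lemma derive_exp_barrier (y v : V) :
  'D_v exp_barrier y = lam * v 0 i0 * exp_barrier y.
Proof. by have [] := is_derive_exp_barrier y v. Qed.

Lemma partial_exp_barrier i :
  partial i exp_barrier = (i0 == i)%:R * lam \*: exp_barrier.
Proof.
apply: funext => y; rewrite /partial derive_exp_barrier.
by rewrite ebasisE -[RHS]/((i0 == i)%:R * lam * exp_barrier y) (mulrC lam).
Qed.

Lemma twice_derivable_on_exp_barrier (A : set V) : twice_derivable_on A exp_barrier.
Proof.
split=> [y _ v|i y _ v]; first by have [] := is_derive_exp_barrier y v.
by rewrite partial_exp_barrier; apply: derivableZ; have [] := is_derive_exp_barrier y v.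
Qed.

Lemma sigma_lap_exp_barrier (sig : V -> R) x : (forall v, derivable sig x v) ->
  sigma_lap sig exp_barrier x
  = lam * exp_barrier x * (partial i0 sig x + lam * sig x).
Proof.
move=> ds; rewrite sigma_lap_sum (bigD1 i0) //= big1 ?addr0 => [|i /negPf i0i].
  rewrite partial_exp_barrier eqxx mul1r.
  have [dpsi _] := is_derive_exp_barrier x (ebasis R i0).
  rewrite /partial (derive_mul (ds _)); last exact: derivableZ.
  rewrite deriveZ // derive_exp_barrier ebasisE eqxx.
  rewrite -[(_ \*: _) x]/(lam * exp_barrier x) -![_ *: _]/(_ * _) mulr1; ring.
rewrite partial_exp_barrier eq_sym i0i mul0r.
under eq_fun do rewrite /= scale0r mulr0.
exact: derive_cst.
Qed.

End Barrier.

Lemma bounded_closure (R : realType) (n : nat) (A : set 'rV[R]_n) :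
  bounded_set A -> bounded_set (closure A).
Proof.
move=> [M [Mreal AM]]; exists M; split => // r Mr x /(closureS (AM r Mr)).
have cl : closed [set y : 'rV[R]_n | `|y| <= r].
  apply: (@preimage_closed _ _ (fun y : 'rV[R]_n => `|y|) [set t : R | t <= r]).
    by move=> y _; exact: norm_continuous.
  exact: closed_le.
by rewrite -(closure_id _).1.
Qed.

Section WeakMaximumPrinciple.
Variables (R : realType) (n : nat) (Omega : set 'rV[R]_n) (sig : 'rV[R]_n -> R).
Variable i0 : 'I_n.
Hypotheses (oO : open Omega) (bO : bounded_set Omega).
Hypotheses (dsig : derivable_on Omega sig) (sig0 : forall y, closure Omega y -> 0 < sig y).
Hypotheses (csig : {within closure Omega, continuous sig})
  (cpsig : cont_ext Omega (partial i0 sig)).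

Let cO : compact (closure Omega).
Proof. exact: bounded_closed_compact (bounded_closure bO) (@closed_closure _ _). Qed.

Lemma sigma_lap_le0_at_max z x : Omega x -> twice_derivable_on Omega z ->
  (forall y, Omega y -> z y <= z x) -> sigma_lap sig z x <= 0.
Proof.
move=> Ox [dz ddz] zmax; rewrite sigma_lap_sum; apply: sumr_le0 => i _.
apply: (derive_flux_le0_at_max oO Ox zmax); first by move=> y Oy; exact: dz.
  by move=> y /subset_closure; exact: sig0.
by apply: derivable_mul; [exact: dsig | exact: ddz].
Qed.

(* [lam] is chosen so that [lam * sig] dominates [- partial i0 sig] on the
   compact closure. *)
Lemma exp_barrier_strict_subsolution : exists lam : R,
  forall y, Omega y -> 0 < sigma_lap sig (exp_barrier i0 lam) y.
Proof.
have [/eqP-> | /set0P [x0 Ox0]] := boolP (Omega == set0); first by exists 0.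
have neO : closure Omega !=set0 by exists x0; exact: subset_closure.
have [G [cG GE]] := cpsig.
have [ym /set_mem ymO minsig] := EVT_min_rV neO cO csig.
have [yg /set_mem ygO minG] := EVT_min_rV neO cO cG.
have c0 : 0 < sig ym := sig0 ymO.
exists (`|G yg| / sig ym + 1) => y Oy; rewrite sigma_lap_exp_barrier; last exact: dsig.
have Cy : closure Omega y := subset_closure Oy.
have lam0 : 0 < `|G yg| / sig ym + 1 by rewrite ltr_wpDl // divr_ge0 // ltW.
rewrite !mulr_gt0 ?exp_barrier_gt0 //.
have Gy : G yg <= partial i0 sig y by rewrite -GE //; apply: minG; exact: mem_set.
have sy : sig ym <= sig y by apply: minsig; exact: mem_set.
have lam_c : (`|G yg| / sig ym + 1) * sig ym = `|G yg| + sig ym.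
  by field; rewrite gt_eqF.
have : (`|G yg| / sig ym + 1) * sig ym <= (`|G yg| / sig ym + 1) * sig y.
  by rewrite ler_wpM2l // ltW.
have : - G yg <= `|G yg| by rewrite -normrN ler_norm.
lra.
Qed.

(* [z + eps psi] has a positive [sig]-Laplacian, so it attains its maximum over
   the closure on the boundary, where it is at most [eps max psi]. *)
Lemma weak_maximum_principle z :
  twice_derivable_on Omega z -> {within closure Omega, continuous z} ->
  (forall y, bdry Omega y -> z y <= 0) ->
  (forall y, Omega y -> 0 <= sigma_lap sig z y) ->
  forall x, Omega x -> z x <= 0.
Proof.
move=> dz cz zbdry zsub x Ox.
have neO : closure Omega !=set0 by exists x; exact: subset_closure.
have [lam psi_sub] := exp_barrier_strict_subsolution.
pose psi := exp_barrier i0 lam.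
have cpsi : {within closure Omega, continuous psi}.
  exact/continuous_subspaceT/continuous_exp_barrier.
have [yk _ psimax] := EVT_max_rV neO cO cpsi.
have K0 : 0 < psi yk := exp_barrier_gt0 _ _ _.
apply/ler_addgt0Pr => e e0; rewrite add0r.
pose eps := e / psi yk; have eps0 : 0 < eps by rewrite divr_gt0.
pose ze := z + eps \*: psi.
have cze : {within closure Omega, continuous ze}.
  apply: within_continuousD => // y.
  by apply: continuousZl_tmp; exact: cpsi.
have [xm /set_mem xmO zemax] := EVT_max_rV neO cO cze.
have xmbdry : bdry Omega xm.
  split => //; rewrite (interior_id Omega).1 // => Oxm.
  have dpsi : twice_derivable_on Omega psi := twice_derivable_on_exp_barrier i0 lam _.
  have dze : twice_derivable_on Omega ze.
    by rewrite /ze; apply: (twice_derivable_onD oO dz); exact: twice_derivable_onZ.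
  have := sigma_lap_le0_at_max Oxm dze (fun y Oy => zemax y (mem_set (subset_closure Oy))).
  rewrite /ze (sigma_lapD oO Oxm (dsig Oxm) dz (twice_derivable_onZ oO eps dpsi)).
  rewrite (sigma_lapZ oO eps Oxm (dsig Oxm) dpsi).
  apply/negP; rewrite -ltNge.
  exact: ltr_pwDr (mulr_gt0 eps0 (psi_sub _ Oxm)) (zsub _ Oxm).
have epsK : eps * psi yk = e by rewrite /eps divfK // gt_eqF.
apply: (@le_trans _ _ (ze x)).
  by rewrite -[ze x]/(z x + eps * psi x) lerDl mulr_ge0 // ltW ?exp_barrier_gt0.
apply: le_trans (zemax _ (mem_set (subset_closure Ox))) _.
rewrite -[e]add0r -epsK -[ze xm]/(z xm + eps * psi xm); apply: lerD.
  exact: zbdry.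
by apply: ler_wpM2l; [exact: ltW | apply: psimax; exact: mem_set].
Qed.

Lemma sigma_harmonic_dirichlet_eq0 z :
  twice_derivable_on Omega z -> {within closure Omega, continuous z} ->
  (forall y, bdry Omega y -> z y = 0) ->
  (forall y, Omega y -> sigma_lap sig z y = 0) ->
  forall x, Omega x -> z x = 0.
Proof.
move=> dz cz zbdry zharm x Ox; apply/eqP; rewrite eq_le; apply/andP; split.
  apply: (weak_maximum_principle dz cz _ _ Ox) => y; first by move/zbdry ->.
  by move/zharm ->.
have dnz := twice_derivable_onZ oO (-1) dz.
have := weak_maximum_principle dnz _ _ _ Ox; rewrite -[_ x]/(-1 * z x) mulN1r oppr_le0.
apply=> [y | y /zbdry | y Oy]; first exact: continuousZl_tmp (cz y).
  by rewrite -[(_ \*: _) y]/(-1 * z y) => ->; rewrite mulr0.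
by rewrite (sigma_lapZ oO (-1) Oy (dsig Oy) dz) zharm // mulr0.
Qed.

Lemma sigma_lap_dirichlet_opp v w :
  twice_derivable_on Omega v -> twice_derivable_on Omega w ->
  {within closure Omega, continuous v} -> {within closure Omega, continuous w} ->
  (forall y, bdry Omega y -> v y = 0) -> (forall y, bdry Omega y -> w y = 0) ->
  (forall y, Omega y -> sigma_lap sig v y = - sigma_lap sig w y) ->
  forall x, Omega x -> v x = - w x.
Proof.
move=> dv dw cv cw vbdry wbdry vw x Ox; apply/eqP; rewrite -addr_eq0; apply/eqP.
apply: (sigma_harmonic_dirichlet_eq0 (z := v + w) _ _ _ _ Ox).
- exact: twice_derivable_onD.
- exact: within_continuousD.
- by move=> y yb; rewrite -[_ y]/(v y + w y) vbdry // wbdry // addr0.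
by move=> y Oy; rewrite (sigma_lapD oO Oy (dsig Oy) dv dw) vw // addNr.
Qed.

End WeakMaximumPrinciple.

Section Identities.
Variables (R : realType) (n : nat).
Local Notation V := 'rV[R]_n.
Implicit Types (f g h u w sig : V -> R) (x : V).

Lemma exists_coord_neq0 (a : V) : a != 0 -> exists i, a 0 i != 0.
Proof.
move=> /eqP a0; apply: contrapT => /forallNP na; apply: a0; apply/rowP => i.
by rewrite mxE; apply/eqP/negPn/negP; exact: na.
Qed.

Lemma dotv_gt0 (a : V) : a != 0 -> 0 < dotv a a.
Proof.
move=> /exists_coord_neq0 [i ai]; rewrite /dotv (bigD1 i) //=.
apply: ltr_pwDl; first by rewrite lt_def mulf_neq0 //= -expr2 sqr_ge0.
by apply: sumr_ge0 => j _; rewrite -expr2 sqr_ge0.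
Qed.

Lemma dotvC (a b : V) : dotv a b = dotv b a.
Proof. by apply: eq_bigr => i _; rewrite mulrC. Qed.

Lemma dotvZr (k : R) (a b : V) : dotv a (k *: b) = k * dotv a b.
Proof. by rewrite /dotv mulr_sumr; apply: eq_bigr => i _; rewrite mxE mulrCA. Qed.

Lemma dotvNr (a b : V) : dotv a (- b) = - dotv a b.
Proof. by rewrite -scaleN1r dotvZr mulN1r. Qed.

Lemma grad_near_eq f g x : {near x, f =1 g} -> grad f x = grad g x.
Proof. by move=> fg; apply/rowP => i; rewrite !mxE /partial (near_eq_derive _ fg). Qed.

Lemma T0_near_eq u f g x : {near x, f =1 g} -> T0 u f x = T0 u g x.
Proof. by move=> fg; rewrite /T0 (grad_near_eq fg). Qed.

Lemma gradN f x : (forall v, derivable f x v) -> grad (fun y => - f y) x = - grad f x.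
Proof. by move=> df; apply/rowP => i; rewrite !mxE /partial deriveN. Qed.

Lemma derivable_sumr (F : 'I_n -> V -> R) x (v : V) :
  (forall j, derivable (F j) x v) -> derivable (fun y => \sum_j F j y) x v.
Proof. by move=> dF; rewrite -[fun y => _]fct_sumE; exact: derivable_sum. Qed.

Lemma sigma_lap_weight sig h u x :
  (forall v, derivable sig x v) -> (forall v, derivable h x v) -> sig x != 0 ->
  (forall i v, derivable (partial i u) x v) -> sigma_lap sig u x = 0 ->
  sigma_lap h u x = sig x * T0 u (fun y => h y / sig y) x.
Proof.
move=> ds dh s0 du; rewrite !sigma_lap_sum => harm.
set lap_u := \sum_i partial i (partial i u) x.
have prod (k : V -> R) : (forall v, derivable k x v) ->
    \sum_i partial i (fun y => k y * partial i u y) x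
    = \sum_i partial i k x * partial i u x + k x * lap_u.
  move=> dk; rewrite /lap_u mulr_sumr -big_split; apply: eq_bigr => i _.
  by rewrite /partial (derive_mul (dk _) (du i _)).
have {}harm : lap_u = - (sig x)^-1 * \sum_i partial i sig x * partial i u x.
  rewrite prod // in harm; apply/(mulfI s0).
  by rewrite mulrA mulrN mulfV // mulN1r; apply/eqP; rewrite -addr_eq0 addrC harm.
rewrite prod // harm /T0 dotv_grad !mulr_sumr -big_split /=.
apply: eq_bigr => i _; rewrite /partial (derive_div s0 (dh _) (ds _)).
by field.
Qed.

Lemma divg_scale g (F : V -> V) x :
  (forall i, derivable g x (ebasis R i)) ->
  (forall i, derivable (fun y => F y 0 i) x (ebasis R i)) ->
  divg (fun y => g y *: F y) x = dotv (grad g x) (F x) + g x * divg F x.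
Proof.
move=> dg dF; rewrite /divg mulr_sumr /dotv -big_split /=; apply: eq_bigr => i _.
under eq_fun do rewrite mxE.
by rewrite /partial derive_mul // mxE.
Qed.

Lemma T0_linear u f g (k : R) x :
  (forall i, derivable f x (ebasis R i)) -> (forall i, derivable g x (ebasis R i)) ->
  T0 u (fun y => f y - k * g y) x = T0 u f x - k * T0 u g x.
Proof.
move=> df dg; rewrite /T0 !dotv_grad mulr_sumr -sumrB; apply: eq_bigr => i _.
have dkg := derivableZ (k := k) (dg i).
rewrite /partial (_ : (fun y => f y - k * g y) = f - k \*: g) //.
by rewrite (deriveB (df i) dkg) (deriveZ _ (dg i)) -[k *: _]/(k * _) mulrBr mulrCA.
Qed.

End Identities.

Section Linearization.
Variables (R : realType) (n : nat).
Local Notation V := 'rV[R]_n.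
Implicit Types (u v w h sig : V -> R) (x y : V).

Definition grad_ratio u w y : R :=
  dotv (grad u y) (grad w y) / dotv (grad u y) (grad u y).

Lemma dF_normalized (p : R) sig u h v w y :
  0 < sig y -> grad u y != 0 -> grad v y = - grad w y ->
  dF p sig u h v y / (sig y * enorm (grad u y) `^ p)
  = h y / sig y - p * grad_ratio u w y.
Proof.
move=> s0 gu0 vw; rewrite /dF /enorm /grad_ratio vw dotvNr.
have D0 := dotv_gt0 gu0; set D := dotv _ _ in D0 *.
have e0 : 0 < Num.sqrt D by rewrite sqrtr_gt0.
rewrite powRB ?(lt0r_neq0 e0) ?implybT // powR_mulrn ?sqr_sqrtr ?ltW //.
have ep : 0 < Num.sqrt D `^ p by apply: powR_gt0.
by field; rewrite (lt0r_neq0 D0) (lt0r_neq0 s0) (lt0r_neq0 ep).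
Qed.

Lemma derivable_grad_ratio u w x (e : V) : grad u x != 0 ->
  (forall j, derivable (partial j u) x e) -> (forall j, derivable (partial j w) x e) ->
  derivable (grad_ratio u w) x e.
Proof.
move=> gu0 du dw; apply: derivable_div; first exact: lt0r_neq0 (dotv_gt0 gu0).
  under eq_fun do rewrite dotv_grad.
  by apply: derivable_sumr => j; exact: derivable_mul.
under eq_fun do rewrite dotv_grad.
by apply: derivable_sumr => j; exact: derivable_mul.
Qed.

Lemma Lop_grad_ratio (p : R) sig u w x :
  (forall e, derivable sig x e) -> (forall i, derivable (grad_ratio u w) x (ebasis R i)) ->
  (forall i e, derivable (partial i u) x e) -> sigma_lap sig u x = 0 ->
  Lop p sig u w x = - sigma_lap sig w x + p * (sig x * T0 u (grad_ratio u w) x).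
Proof.
move=> ds dG du harm.
have dflux i : derivable (fun y => (sig y *: grad u y) 0 i) x (ebasis R i).
  under eq_fun do rewrite !mxE.
  exact: derivable_mul (ds _) (du i _).
rewrite /Lop (_ : (fun y => _ *: grad u y) = fun y => grad_ratio u w y *: (sig y *: grad u y)).
  rewrite divg_scale //; rewrite /sigma_lap in harm.
  by rewrite harm mulr0 addr0 dotvZr dotvC.
by apply: funext => y; rewrite scalerA /grad_ratio; congr (_ *: _); ring.
Qed.

End Linearization.

Theorem proposition2p1 (R : realType) (n : nat) (Omega : set 'rV[R]_n)
  (sigma0 f u0 h : 'rV[R]_n -> R) (alpha p : R) :
  open Omega -> bounded_set Omega -> simply_connected Omega ->
  smooth_boundary Omega ->
  C2_closure Omega sigma0 -> (forall x, closure Omega x -> 0 < sigma0 x) ->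
  0 < alpha < 1 -> C2alpha_bdry Omega alpha f ->
  (* u0: classical solution of div(sigma0 grad u0) = 0, u0 = f on the boundary,
     C^1 up to the boundary with non-vanishing gradient on closure Omega *)
  C2_on Omega u0 -> {within closure Omega, continuous u0} ->
  (forall x, Omega x -> sigma_lap sigma0 u0 x = 0) ->
  (forall x, bdry Omega x -> u0 x = f x) ->
  (exists G : 'rV[R]_n -> 'rV[R]_n,
      [/\ {within closure Omega, continuous G},
          (forall x, Omega x -> G x = grad u0 x) &
          (forall x, closure Omega x -> G x != 0)]) ->
  0 < p ->
  C2_closure Omega h ->
  forall v0 w : 'rV[R]_n -> R,
  (* v0 solves div(sigma0 grad v0) = - div(h grad u0), v0 = 0 on the boundary *)
  C2_on Omega v0 -> {within closure Omega, continuous v0} ->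
  (forall x, Omega x -> sigma_lap sigma0 v0 x = - sigma_lap h u0 x) ->
  (forall x, bdry Omega x -> v0 x = 0) ->
  (* w = Delta_{sigma0,D}^{-1} (sigma0 T0 rho), rho = h / sigma0 *)
  C2_on Omega w -> {within closure Omega, continuous w} ->
  (forall x, Omega x ->
     sigma_lap sigma0 w x = sigma0 x * T0 u0 (fun y => h y / sigma0 y) x) ->
  (forall x, bdry Omega x -> w x = 0) ->
  forall x, Omega x ->
    sigma0 x * T0 u0 (fun y => dF p sigma0 u0 h v0 y
                               / (sigma0 y * (enorm (grad u0 y) `^ p))) x
    = - Lop p sigma0 u0 w x.
Proof.
move=> oO bO _ _ [sC2 scont sext _] spos _ _ uC2 _ uharm _ [G [_ GE GnZ]] _ [hC2 _ _ _].
move=> v0 w vC2 vcont vlap vbdry wC2 wcont wlap wbdry x Ox.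
have [[ds _] [dh _]] := (C2_on_twice_derivable sC2, C2_on_twice_derivable hC2).
have [_ ddu] := C2_on_twice_derivable uC2.
have [dv dw] := (C2_on_twice_derivable vC2, C2_on_twice_derivable wC2).
have s0 y : Omega y -> 0 < sigma0 y by move=> Oy; exact/spos/subset_closure.
have gu0 y : Omega y -> grad u0 y != 0.
  by move=> Oy; rewrite -GE //; exact/GnZ/subset_closure.
have [i0 _] := exists_coord_neq0 (gu0 x Ox).
have vw : forall y, Omega y -> v0 y = - w y.
  apply: (sigma_lap_dirichlet_opp (i0 := i0) oO bO ds spos scont (sext i0)
    dv dw vcont wcont vbdry wbdry) => z Oz.
  rewrite (vlap _ Oz) (wlap _ Oz); congr (- _).
  exact: sigma_lap_weight (ds _ Oz) (dh _ Oz) (lt0r_neq0 (s0 _ Oz))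
    (fun i => ddu i z Oz) (uharm _ Oz).
have gvw y : Omega y -> grad v0 y = - grad w y.
  move=> Oy; rewrite -gradN; last exact: dw.1.
  by apply: grad_near_eq; apply: (near_on_open oO Oy) => z /vw.
have Fnear : {near x, (fun y => dF p sigma0 u0 h v0 y / (sigma0 y * enorm (grad u0 y) `^ p))
    =1 (fun y => h y / sigma0 y - p * grad_ratio u0 w y)}.
  by apply: (near_on_open oO Ox) => y Oy; exact: dF_normalized (s0 y Oy) (gu0 y Oy) (gvw y Oy).
have dG i : derivable (grad_ratio u0 w) x (ebasis R i).
  exact: derivable_grad_ratio (gu0 x Ox) (fun j => ddu j x Ox _) (fun j => dw.2 j x Ox _).
rewrite (T0_near_eq _ Fnear) T0_linear // => [|i]; last first.
  exact: derivable_div (lt0r_neq0 (s0 x Ox)) (dh x Ox _) (ds x Ox _).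
rewrite (Lop_grad_ratio p (ds x Ox) dG (fun i => ddu i x Ox) (uharm x Ox)) wlap //.
by rewrite opprD opprK mulrBr mulrCA.
Qed.
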